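(* Let $X$ be a finite set of distinct points in $\mathbb{R}^2$ such that no three points of $X$ are collinear. Fix distinct points $s, t \in X$. Then there exists a noncrossing Hamiltonian path through $X$ with endpoints $s$ and $t$.
   Context: Edges are straight line segments between points: for an edge $e=\{a,b\}$, $L(e)$ is the closed segment from $a$ to $b$. A path (set of edges) is noncrossing if no two of its edges have intersecting line segments (other than at a shared endpoint). *)

From HB Require Import structures.
From mathcomp Require Import all_boot all_order all_algebra.
Set Implicit Arguments. Unset Strict Implicit. Unset Printing Implicit Defensive.
Import Order.TTheory GRing.Theory Num.Theory.
Local Open Scope ring_scope.

Section Geom.
Variable R : realFieldType.
Notation pt := (R * R)%type.

(* a, b, c are collinear (signed area of the triangle is zero). *)
Definition collinear (a b c : pt) : Prop :=
  (b.1 - a.1) * (c.2 - a.2) - (b.2 - a.2) * (c.1 - a.1) = 0.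

Definition no_three_collinear (X : seq pt) : Prop :=
  forall a b c, a \in X -> b \in X -> c \in X ->
    a != b -> b != c -> a != c -> ~ collinear a b c.

Definition on_seg (a b x : pt) : Prop :=
  exists l : R, 0 <= l <= 1 /\
    x = ((1 - l) * a.1 + l * b.1, (1 - l) * a.2 + l * b.2).

Definition noncrossing_path (p : seq pt) : Prop :=
  forall (d : pt) (i j : nat), (i < j)%N -> (j.+1 < size p)%N ->
    forall x, on_seg (nth d p i) (nth d p i.+1) x ->
              on_seg (nth d p j) (nth d p j.+1) x ->
      (x = nth d p i \/ x = nth d p i.+1) /\ (x = nth d p j \/ x = nth d p j.+1).
End Geom.

From HB Require Import structures.
From mathcomp Require Import all_boot all_order all_algebra.
From mathcomp Require Import reals.
From mathcomp Require Import ring lra.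
Import Order.TTheory GRing.Theory Num.Theory.
Local Open Scope ring_scope.
Set Implicit Arguments. Unset Strict Implicit. Unset Printing Implicit Defensive.

(** Visit the points of X other than s in angular order around s, so that the
    tour ends at t.  Each edge then lies in its own angular sector at s, and any
    two edges are separated by the line st or by a line through s and a vertex;
    this works as long as no two angularly consecutive points are a half-turn or
    more apart.  Otherwise s is exposed: some line through s has all other points
    strictly on one side.  Turning that line about s until it hits a point gives
    one of the two hull edges at s, say sy with y <> t; y is exposed in X \ {s},
    so by induction on |X| there is a path from y to t through X \ {s}, and the
    edge sy, lying on a supporting line of X, meets that path only at y. *)

Section AllPairs.
Variable T : eqType.
Implicit Types (r : T -> T -> Prop) (s : seq T).

Fixpoint all_pairs r s : Prop :=
  if s is x :: s' then (forall y, y \in s' -> r x y) /\ all_pairs r s' else True.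

Lemma all_pairs_cat r s1 s2 :
  all_pairs r (s1 ++ s2) <->
  [/\ all_pairs r s1, all_pairs r s2 & forall x y, x \in s1 -> y \in s2 -> r x y].
Proof.
elim: s1 => [|x s1 IH] /=; first by split=> [|[]].
rewrite IH; split=> [[rx [r1 r2 r12]] | [[rx r1] r2 r12]].
  split=> //; first by split=> // y ys1; apply: rx; rewrite mem_cat ys1.
  move=> u v; rewrite inE => /predU1P[-> vs2|/r12]; last exact.
  by apply: rx; rewrite mem_cat vs2 orbT.
split; last by split=> // u v us1; apply: r12; rewrite inE us1 orbT.
by move=> y; rewrite mem_cat => /orP[/rx|/(r12 x)] //; apply; exact: mem_head.
Qed.

Lemma all_pairs_nth r s d i j :
  all_pairs r s -> (i < j)%N -> (j < size s)%N -> r (nth d s i) (nth d s j).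
Proof.
elim: s i j => [|x s IH] i [|j] //= [rx rs]; case: i => [|i] /= ij js.
  by apply: rx; apply: mem_nth.
exact: IH.
Qed.

Definition edges (x : T) s : seq (T * T) := zip (belast x s) s.

Lemma edges_cons x y s : edges x (y :: s) = (x, y) :: edges y s.
Proof. by []. Qed.

Lemma mem_edges x s u v : (u, v) \in edges x s -> u \in belast x s /\ v \in s.
Proof.
have sz : size (belast x s) = size s by rewrite size_belast.
move=> e; split.
  by rewrite -[belast x s](unzip1_zip (eq_leq sz)); apply: (map_f fst e).
by rewrite -[s](unzip2_zip (eq_leq (esym sz))); apply: (map_f snd e).
Qed.

Lemma edges_cat x s1 y s2 :
  edges x (s1 ++ y :: s2) = edges x s1 ++ (last x s1, y) :: edges y s2.
Proof. by rewrite /edges belast_cat zip_cat ?size_belast. Qed.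

Lemma nth_edges d x s i : (i < size s)%N ->
  nth (d, d) (edges x s) i = (nth d (x :: s) i, nth d (x :: s) i.+1).
Proof.
move=> lti; rewrite nth_zip ?size_belast //; congr pair.
by rewrite [x :: s]lastI nth_rcons size_belast lti.
Qed.

End AllPairs.

Section Plane.
Variable R : realFieldType.
Notation pt := (R * R)%type.
Local Notation conv p q l := ((1 - l) * p.1 + l * q.1, (1 - l) * p.2 + l * q.2).
Implicit Types (p q c d o w x y z : pt) (G : pt -> R).

Definition cross o a x : R := (a.1 - o.1) * (x.2 - o.2) - (a.2 - o.2) * (x.1 - o.1).

Definition lin w o x : R := w.1 * (x.1 - o.1) + w.2 * (x.2 - o.2).

Definition affine G := forall p q l, G (conv p q l) = (1 - l) * G p + l * G q.

Definition noncrossing_edges (e f : pt * pt) : Prop :=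
  forall x, on_seg e.1 e.2 x -> on_seg f.1 f.2 x ->
    (x = e.1 \/ x = e.2) /\ (x = f.1 \/ x = f.2).

Lemma affine_lin w o : affine (lin w o).
Proof. by move=> p q l; rewrite /lin /=; ring. Qed.

Lemma affine_cross o a : affine (cross o a).
Proof. by move=> p q l; rewrite /cross /=; ring. Qed.

Lemma affineZ k G : affine G -> affine (fun x => k * G x).
Proof. by move=> aG p q l; rewrite aG; ring. Qed.

Lemma conv1 p q : conv p q 1 = q.
Proof. by rewrite subrr !mul0r !mul1r !add0r; case: q. Qed.

Lemma conv0 p q : conv p q 0 = p.
Proof. by rewrite subr0 !mul0r !mul1r !addr0; case: p. Qed.

Lemma affine_on_seg_le0 G p q x : affine G ->
  G p <= 0 -> G q <= 0 -> on_seg p q x -> G x <= 0.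
Proof. by move=> aG hp hq [l [/andP[l0 l1] ->]]; rewrite aG; nra. Qed.

Lemma affine_on_seg_eq0 G p q x : affine G ->
  G p <= 0 -> G q <= 0 -> G p < 0 \/ G q < 0 -> on_seg p q x -> G x = 0 ->
  x = p \/ x = q.
Proof.
move=> aG hp hq hpq [l [/andP[l0 l1] ->]]; rewrite aG => Gx.
case: hpq => h; [right; have -> : l = 1 by nra | left; have -> : l = 0 by nra].
  exact: conv1.
exact: conv0.
Qed.

Lemma affine_separates G p q c d : affine G ->
  G p <= 0 -> G q <= 0 -> G p < 0 \/ G q < 0 ->
  0 <= G c -> 0 <= G d -> 0 < G c \/ 0 < G d ->
  noncrossing_edges (p, q) (c, d).
Proof.
move=> aG hp hq hpq hc hd hcd x /= xpq xcd.
have aN := affineZ (-1) aG.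
have Gx : G x = 0.
  apply/eqP; rewrite eq_le (affine_on_seg_le0 aG hp hq xpq) -oppr_le0 -mulN1r.
  by apply: (affine_on_seg_le0 aN) xcd; rewrite mulN1r oppr_le0.
split; first exact: affine_on_seg_eq0 aG hp hq hpq xpq Gx.
apply: (affine_on_seg_eq0 aN) xcd _; rewrite !mulN1r ?oppr_le0 ?oppr_lt0 //.
by rewrite Gx oppr0.
Qed.

Lemma affine_touches G p q c d : affine G ->
  G p = 0 -> G q = 0 -> 0 <= G c -> (G c = 0 -> c = q) -> 0 < G d ->
  noncrossing_edges (p, q) (c, d).
Proof.
move=> aG hp hq hc hcq hd x /= xpq xcd.
have Gx : G x = 0.
  by case: xpq => l [_ ->]; rewrite aG hp hq !mulr0 addr0.
have aN := affineZ (-1) aG.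
have [xc|xd] : x = c \/ x = d.
  apply: (affine_on_seg_eq0 aN) xcd _; rewrite !mulN1r ?oppr_le0 ?oppr_lt0 //.
  - exact: ltW.
  - by right.
  - by rewrite Gx oppr0.
  have cq : c = q by apply: hcq; rewrite -xc.
  by rewrite xc cq; tauto.
by move: hd; rewrite -xd Gx ltxx.
Qed.

Lemma noncrossing_path_edges x s :
  all_pairs noncrossing_edges (edges x s) -> noncrossing_path (x :: s).
Proof.
move=> H d i j ij js; have lt_i_s : (i < size s)%N by rewrite (ltn_trans ij).
have := all_pairs_nth (d, d) H ij; rewrite size_zip size_belast minnn.
by rewrite !nth_edges //; apply.
Qed.

Lemma cross_antisym o a x : cross o a x = - cross o x a.
Proof. by rewrite /cross; ring. Qed.

Lemma cross_flip o a x : cross a o x = - cross o a x.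
Proof. by rewrite /cross; ring. Qed.

Lemma cross_same o a : cross o a a = 0.
Proof. by rewrite /cross; ring. Qed.

Lemma cross_origin o a : cross o a o = 0.
Proof. by rewrite /cross; ring. Qed.

Section Fan.
Variables (k : R) (s : pt).
Let ccw u v := 0 < k * cross s u v.

Lemma fan_edges_noncrossing y L :
  pairwise ccw (y :: L) -> all_pairs noncrossing_edges (edges y L).
Proof.
elim: L y => [|z L IH] y //= /andP[/andP[yz _] zLp]; split; last exact: IH.
move: zLp => /andP[/allP zL _] [u v] /mem_edges[/mem_belast uzL vL].
apply: (affine_separates (G := fun x => k * cross s z x)).
- exact/affineZ/affine_cross.
- by rewrite cross_antisym mulrN oppr_le0 ltW.
- by rewrite cross_same mulr0.
- by left; rewrite cross_antisym mulrN oppr_lt0.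
- by move: uzL; rewrite inE => /predU1P[->|/zL/ltW//]; rewrite cross_same mulr0.
- exact/ltW/zL.
- by right; apply: zL.
Qed.

Lemma fan_path_noncrossing L :
  pairwise ccw L -> all_pairs noncrossing_edges (edges s L).
Proof.
case: L => [|y L] //= /andP[/allP yL yLp]; split.
  move=> [u v] /mem_edges[/mem_belast uyL vL].
  apply: (affine_touches (G := fun x => k * cross s y x)).
  - exact/affineZ/affine_cross.
  - by rewrite cross_origin mulr0.
  - by rewrite cross_same mulr0.
  - by move: uyL; rewrite inE => /predU1P[->|/yL/ltW//]; rewrite cross_same mulr0.
  - by move: uyL; rewrite inE => /predU1P[//|/yL/gt_eqF/eqP nz /nz].
  - exact: yL.
by apply: fan_edges_noncrossing; rewrite /= yLp andbT; apply/allP.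
Qed.

End Fan.

Lemma eq_of_cross_eq0 X o x y : no_three_collinear X ->
  o \in X -> x \in X -> y \in X -> x != o -> y != o -> cross o x y = 0 -> x = y.
Proof.
move=> ntc oX xX yX xo yo xy0; apply/eqP/negPn/negP => xy.
by apply: (ntc o x y) xy0; rewrite // eq_sym.
Qed.

Lemma lin_origin w o : lin w o o = 0.
Proof. by rewrite /lin !subrr !mulr0 addr0. Qed.

Lemma lin_cross h f o y z :
  lin h o y * lin f o z - lin h o z * lin f o y = (h.1 * f.2 - h.2 * f.1) * cross o y z.
Proof. by rewrite /lin /cross; ring. Qed.

Lemma exists_argmin (T : eqType) (f : T -> R) (L : seq T) : L != [::] ->
  exists2 y : T, y \in L & forall z : T, z \in L -> f y <= f z.
Proof.
elim: L => [|x [|x' L] IH] // _.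
  by exists x => [|z]; rewrite ?mem_seq1 // => /eqP->.
have [y yL ymin] := IH isT.
have [fxy|fyx] := leP (f x) (f y).
  exists x => [|z]; first exact: mem_head.
  by rewrite inE => /predU1P[->//|/ymin]; apply: le_trans.
exists y => [|z]; first by rewrite inE yL orbT.
by rewrite inE => /predU1P[->|/ymin//]; apply: ltW.
Qed.

Definition exposed (X : seq pt) s := exists w, forall x, x \in X -> x != s -> 0 < lin w s x.

Definition supporting_edge (X : seq pt) s y :=
  exists g, lin g s y = 0 /\ forall z, z \in X -> z != s -> z != y -> 0 < lin g s z.

Definition noncrossing_hampath (X : seq pt) (s t : pt) (q : seq pt) :=
  [/\ perm_eq (s :: q) X, last s q = t & all_pairs noncrossing_edges (edges s q)].

Section SupportingEdge.
Variables (X : seq pt) (s f : pt).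
Hypotheses (ntc : no_three_collinear X) (sX : s \in X)
  (f_pos : forall x, x \in X -> x != s -> 0 < lin f s x).

Let ratio h x := lin h s x / lin f s x.

Let f_neq0 x : x \in X -> x != s -> lin f s x != 0.
Proof. by move=> xX xs; rewrite gt_eqF ?f_pos. Qed.

Lemma ratio_inj h y z : h.1 * f.2 - h.2 * f.1 != 0 ->
  y \in X -> z \in X -> y != s -> z != s -> ratio h y = ratio h z -> y = z.
Proof.
move=> hf yX zX ys zs /eqP; rewrite eqr_div ?f_neq0 // -subr_eq0 lin_cross.
rewrite mulf_eq0 (negbTE hf) /= => /eqP.
exact: (eq_of_cross_eq0 ntc sX yX zX ys zs).
Qed.

Lemma supporting_edge_argmin h y : h.1 * f.2 - h.2 * f.1 != 0 ->
  y \in X -> y != s -> (forall z, z \in X -> z != s -> ratio h y <= ratio h z) ->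
  supporting_edge X s y.
Proof.
move=> hf yX ys ymin; set r := ratio h y.
have linE z : lin (h.1 - r * f.1, h.2 - r * f.2) s z = lin h s z - r * lin f s z.
  by rewrite /lin /=; ring.
have linhE z : z \in X -> z != s -> lin h s z = ratio h z * lin f s z.
  by move=> zX zs; rewrite /ratio divfK ?f_neq0.
exists (h.1 - r * f.1, h.2 - r * f.2); split=> [|z zX zs zy].
  by rewrite linE linhE // -mulrBl subrr mul0r.
rewrite linE linhE // -mulrBl mulr_gt0 ?f_pos // subr_gt0 lt_neqAle ymin // andbT.
by apply: contra_neq zy => /(ratio_inj hf yX zX ys zs) ->.
Qed.

(* Minimising and maximising the slope [lin h / lin f] over [X \ s] yields the
   two hull edges at [s]; their far ends differ, so one of them avoids [t]. *)
Lemma exists_supporting_edge t z : z \in X -> z != s -> z != t ->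
  exists2 y, y \in X & [/\ y != s, y != t & supporting_edge X s y].
Proof.
move=> zX zs zt; set h := (- f.2, f.1); set h' := (f.2, - f.1).
have f0 : f.1 * f.1 + f.2 * f.2 != 0.
  apply: contraTneq (f_pos zX zs) => e.
  have f1 : f.1 = 0 by nra.
  have f2 : f.2 = 0 by nra.
  by rewrite /lin f1 f2 !mul0r addr0 ltxx.
have hf : h.1 * f.2 - h.2 * f.1 != 0.
  by rewrite (_ : _ - _ = - (f.1 * f.1 + f.2 * f.2)) ?oppr_eq0 //= ; ring.
have h'f : h'.1 * f.2 - h'.2 * f.1 != 0.
  by rewrite (_ : _ - _ = f.1 * f.1 + f.2 * f.2) //=; ring.
have ratioN x : ratio h' x = - ratio h x by rewrite /ratio -mulNr /lin /=; congr (_ / _); ring.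
set Y := [seq x <- X | x != s].
have memY x : x \in Y -> x \in X /\ x != s by rewrite mem_filter => /andP[].
have YX x : x \in X -> x != s -> x \in Y by rewrite mem_filter => -> ->.
have Yne : Y != [::] by apply/negP => /eqP Y0; move: (YX z zX zs); rewrite Y0.
have [y1 /memY[y1X y1s] y1min] := exists_argmin (ratio h) Yne.
have [y2 /memY[y2X y2s] y2min] := exists_argmin (ratio h') Yne.
have [y1t|y1t] := eqVneq y1 t; last first.
  exists y1 => //; split=> //.
  by apply: (supporting_edge_argmin hf) => // x xX xs; apply/y1min/YX.
have [y2t|y2t] := eqVneq y2 t; last first.
  exists y2 => //; split=> //.
  by apply: (supporting_edge_argmin h'f) => // x xX xs; apply/y2min/YX.
subst y1 y2; have hzt : ratio h z = ratio h t.
  apply/eqP; rewrite eq_le y1min ?YX //= -lerN2 -!ratioN andbT.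
  exact/y2min/YX.
by move: zt; rewrite (ratio_inj hf zX y1X zs y1s hzt) eqxx.
Qed.

End SupportingEdge.

Lemma supporting_edge_exposed X s y : uniq X -> supporting_edge X s y ->
  exposed (rem s X) y.
Proof.
move=> uX [g [gy g_pos]]; exists g => x; rewrite mem_rem_uniq // inE => /andP[xs xX] xy.
have -> : lin g y x = lin g s x - lin g s y by rewrite /lin; ring.
by rewrite gy subr0 g_pos.
Qed.

Lemma hampath_cons_supporting X s y t (q : seq pt) :
  uniq X -> s \in X -> supporting_edge X s y ->
  noncrossing_hampath (rem s X) y t q -> noncrossing_hampath X s t (y :: q).
Proof.
move=> uX sX [g [gy g_pos]] [pq lq ncq].
have memq x : x \in q -> [/\ x \in X, x != s & x != y].
  move=> xq; have : x \in rem s X by rewrite -(perm_mem pq) inE xq orbT.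
  rewrite mem_rem_uniq // inE => /andP[-> ->]; split=> //; apply: contraTneq xq => ->.
  by move: (perm_uniq pq); rewrite rem_uniq //= => /andP[].
split=> //; first by rewrite perm_sym (perm_trans (perm_to_rem sX)) // perm_cons perm_sym.
rewrite edges_cons; split=> // -[u v] /mem_edges[/mem_belast uyq /memq[vX vs vy]].
apply: (affine_touches (affine_lin g s)) => //.
- exact: lin_origin.
- by move: uyq; rewrite inE => /predU1P[->|/memq[uX' us uy]]; rewrite ?gy // ltW ?g_pos.
- by move: uyq; rewrite inE => /predU1P[//|/memq[uX' us uy] /eqP]; rewrite gt_eqF ?g_pos.
- exact: g_pos.
Qed.

Lemma exposed_hampath X s t : uniq X -> no_three_collinear X ->
  s \in X -> t \in X -> s != t -> exposed X s ->
  exists q : seq pt, noncrossing_hampath X s t q.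
Proof.
move=> + + + + + [f]; have [n] := ubnP (size X).
elim: n => // n IH in X s f *; move=> leXn uX ntc sX tX st f_pos.
have memY z : (z \in rem s X) = (z != s) && (z \in X) by rewrite mem_rem_uniq // inE.
have [/allP Yt | /allPn[z]] := boolP (all (pred1 t) (rem s X)).
  exists [:: t]; split=> //; rewrite perm_sym (perm_trans (perm_to_rem sX)) // perm_cons.
  apply: uniq_perm => [||x]; rewrite ?rem_uniq // mem_seq1.
  by apply/idP/eqP => [/Yt/eqP|->]; rewrite // memY eq_sym st.
rewrite memY => /andP[zs zX] zt.
have [y yX [ys yt sy]] := exists_supporting_edge ntc sX f_pos zX zs zt.
have [g g_pos] := supporting_edge_exposed uX sy.
have [q hq] : exists q : seq pt, noncrossing_hampath (rem s X) y t q.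
  apply: (IH _ y g) => //.
  - by move: leXn; rewrite (perm_size (perm_to_rem sX)) ltnS.
  - exact: rem_uniq.
  - by move=> a b c; rewrite !memY => /andP[_ ?] /andP[_ ?] /andP[_ ?]; apply: ntc.
  - by rewrite memY ys.
  - by rewrite memY eq_sym st.
by exists (y :: q); apply: hampath_cons_supporting.
Qed.

Lemma fan_bridge_head s a b L : pairwise (fun u v => 0 < cross s u v) (b :: L) ->
  0 < cross s a b -> forall e, e \in edges b L -> noncrossing_edges (a, b) e.
Proof.
move=> /andP[/allP bL _] ab [u v] /mem_edges[/mem_belast ubL vL].
apply: (affine_separates (affine_cross s b)); rewrite ?cross_same //.
- by rewrite cross_antisym oppr_le0 ltW.
- by left; rewrite cross_antisym oppr_lt0.
- by move: ubL; rewrite inE => /predU1P[->|/bL/ltW//]; rewrite cross_same.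
- exact/ltW/bL.
- by right; apply: bL.
Qed.

Lemma fan_bridge_last s A a b : pairwise (fun u v => 0 < cross s u v) (rcons A a) ->
  0 < cross s a b -> forall e, e \in edges s (rcons A a) -> noncrossing_edges e (a, b).
Proof.
rewrite pairwise_rcons => /andP[/allP Aa _] ab [u v] /mem_edges[].
have {}Aa u' : u' \in A -> cross s a u' < 0 by move/Aa; rewrite cross_antisym oppr_gt0.
have sep p q : cross s a p <= 0 -> cross s a q <= 0 ->
    cross s a p < 0 \/ cross s a q < 0 -> noncrossing_edges (p, q) (a, b).
  move=> hp hq hpq; apply: (affine_separates (affine_cross s a) hp hq hpq).
  - by rewrite cross_same.
  - exact: ltW.
  - by right.
rewrite belast_rcons inE mem_rcons inE => /predU1P[us|/Aa uA] /predU1P[va|/Aa vA].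
- rewrite us va; apply: (affine_touches (affine_cross s a)) ab.
  + exact: cross_origin.
  + exact: cross_same.
  + by rewrite cross_same.
  + by [].
- by apply: sep; [rewrite us cross_origin | exact: ltW | right].
- by apply: sep; [exact: ltW | rewrite va cross_same | left].
- by apply: sep; [exact: ltW | exact: ltW | left].
Qed.

Section AngularOrder.
Variables (X : seq pt) (s t : pt).
Hypotheses (uX : uniq X) (ntc : no_three_collinear X) (sX : s \in X) (tX : t \in X)
  (st : s != t).

Let dir := (t.1 - s.1, t.2 - s.2).

(* [- cot] of the angle from [st] to [sx]: on each side of the line [st] it
   increases with that angle. *)
Definition angle_key x := - lin dir s x / cross s t x.

Lemma dir_gt0 : 0 < lin dir s t.
Proof.
rewrite /lin /dir /= -!expr2 lt_def addr_ge0 ?sqr_ge0 // andbT.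
rewrite paddr_eq0 ?sqr_ge0 // !sqrf_eq0 !subr_eq0; apply: contraNN st.
move=> /andP[/eqP e1 /eqP e2]; apply/eqP.
by rewrite [s]surjective_pairing [t]surjective_pairing e1 e2.
Qed.

Lemma cross_angle_key u v : cross s t u != 0 -> cross s t v != 0 ->
  lin dir s t * cross s u v = cross s t u * cross s t v * (angle_key v - angle_key u).
Proof. by rewrite /angle_key /lin /cross /= => *; field; apply/andP. Qed.

Definition side tau := [seq x <- X | 0 < tau * cross s t x].

Lemma mem_side tau x : x \in side tau ->
  [/\ x \in X, x != s, x != t & 0 < tau * cross s t x].
Proof.
rewrite mem_filter => /andP[cx ->]; split=> //.
  by apply: contraTneq cx => ->; rewrite cross_origin mulr0 ltxx.
by apply: contraTneq cx => ->; rewrite cross_same mulr0 ltxx.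
Qed.

Lemma side_cross_gt0 tau x y : x \in side tau -> y \in side tau ->
  0 < cross s t x * cross s t y.
Proof.
move=> /mem_side[_ _ _ cx] /mem_side[_ _ _ cy].
case: (ltgtP 0 tau) => [tau_gt0|tau_lt0|tau0].
- by rewrite mulr_gt0 // -(pmulr_rgt0 _ tau_gt0).
- by rewrite nmulr_rgt0 -(nmulr_rgt0 _ tau_lt0).
- by move: cx; rewrite -tau0 mul0r ltxx.
Qed.

Lemma side_cross_neq0 tau x : x \in side tau -> cross s t x != 0.
Proof. by move=> /mem_side[_ _ _]; apply: contraTneq => ->; rewrite mulr0 ltxx. Qed.

Lemma cross_neq0 x : x \in X -> x != s -> x != t -> cross s t x != 0.
Proof. by move=> xX xs xt; apply/eqP; apply: (ntc sX tX xX); rewrite // eq_sym. Qed.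

Lemma side_cases tau x : tau != 0 -> x \in X -> x != s -> x != t ->
  x \in side tau \/ x \in side (- tau).
Proof.
move=> tau0 xX xs xt; rewrite !mem_filter xX !andbT mulNr oppr_gt0.
have : tau * cross s t x != 0 by rewrite mulf_neq0 // cross_neq0.
by rewrite neq_lt => /orP[]; [right|left].
Qed.

Lemma angle_key_inj tau x y : x \in side tau -> y \in side tau ->
  angle_key x = angle_key y -> x = y.
Proof.
move=> xS yS kxy; have [xX xs _ _] := mem_side xS; have [yX ys _ _] := mem_side yS.
have /eqP := cross_angle_key (side_cross_neq0 xS) (side_cross_neq0 yS).
rewrite kxy subrr mulr0 mulf_eq0 (gt_eqF dir_gt0) /= => /eqP.
exact: eq_of_cross_eq0 ntc sX xX yX xs ys.
Qed.

Lemma cross_gt0_angle_key tau u v k : u \in side tau -> v \in side tau ->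
  (0 < k * cross s u v) = (0 < k * (angle_key v - angle_key u)).
Proof.
move=> uS vS; rewrite -(pmulr_rgt0 _ dir_gt0) mulrCA.
rewrite cross_angle_key ?(side_cross_neq0 uS) ?(side_cross_neq0 vS) // mulrCA.
by rewrite pmulr_rgt0 //; apply: side_cross_gt0 uS vS.
Qed.

Definition angle_sort sigma tau :=
  sort (fun x y => sigma * angle_key x <= sigma * angle_key y) (side tau).

Lemma perm_angle_sort sigma tau : perm_eq (angle_sort sigma tau) (side tau).
Proof. by rewrite perm_sort. Qed.

Lemma mem_angle_sort sigma tau : angle_sort sigma tau =i side tau.
Proof. exact: mem_sort. Qed.

Lemma angle_sort_lt sigma tau : sigma != 0 ->
  pairwise (fun x y => sigma * angle_key x < sigma * angle_key y) (angle_sort sigma tau).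
Proof.
move=> sigma0; set f := fun x => sigma * angle_key x.
rewrite -sorted_pairwise; last by move=> y x z; apply: lt_trans.
rewrite -(@sorted_map _ _ f <%R) lt_sorted_uniq_le sorted_map sort_sorted ?andbT; last first.
  by move=> x y; apply: le_total.
rewrite map_inj_in_uniq; first by rewrite sort_uniq filter_uniq.
move=> x y; rewrite !mem_angle_sort => xS yS /(mulfI sigma0).
exact: (angle_key_inj xS yS).
Qed.

Lemma angle_sort_fan sigma tau : sigma != 0 ->
  pairwise (fun u v => 0 < sigma * cross s u v) (angle_sort sigma tau).
Proof.
move=> sigma0; apply: (sub_in_pairwise (P := mem (side tau))) (angle_sort_lt tau sigma0).
  by move=> u v uS vS lt_uv; rewrite (cross_gt0_angle_key _ uS vS) mulrBr subr_gt0.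
by apply/allP => x; rewrite mem_angle_sort.
Qed.

Lemma angle_sort_fan_rcons tau : tau != 0 ->
  pairwise (fun u v => 0 < - tau * cross s u v) (rcons (angle_sort (- tau) tau) t).
Proof.
move=> tau0; rewrite pairwise_rcons angle_sort_fan ?oppr_eq0 // andbT.
apply/allP => x; rewrite mem_angle_sort => /mem_side[_ _ _].
by rewrite [cross s x t]cross_antisym mulrNN.
Qed.

Lemma angle_sort_last sigma tau A a : sigma != 0 -> angle_sort sigma tau = rcons A a ->
  forall x, x \in side tau -> sigma * angle_key x <= sigma * angle_key a.
Proof.
move=> sigma0 eA x; rewrite -(mem_angle_sort sigma) eA mem_rcons inE => /predU1P[->//|xA].
have := angle_sort_lt tau sigma0; rewrite eA pairwise_rcons => /andP[/allP lt_a _].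
exact/ltW/lt_a.
Qed.

Lemma angle_sort_head sigma tau b B : sigma != 0 -> angle_sort sigma tau = b :: B ->
  forall x, x \in side tau -> sigma * angle_key b <= sigma * angle_key x.
Proof.
move=> sigma0 eB x; rewrite -(mem_angle_sort sigma) eB inE => /predU1P[->//|xB].
have := angle_sort_lt tau sigma0; rewrite eB /= => /andP[/allP lt_b _].
exact/ltW/lt_b.
Qed.

Lemma perm_sides tau L1 L2 : tau != 0 ->
  perm_eq L1 (side tau) -> perm_eq L2 (side (- tau)) -> perm_eq (s :: L1 ++ rcons L2 t) X.
Proof.
move=> tau0 p1 p2; apply: (@perm_trans _ (s :: side tau ++ rcons (side (- tau)) t)).
  by rewrite perm_cons; apply: perm_cat => //; rewrite -!cats1 perm_cat2r.
have notin_side x tau' : x \in side tau' -> x != s /\ x != t by case/mem_side.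
have opp_side x : x \in side (- tau) -> x \notin side tau.
  by move=> /mem_side[_ _ _]; rewrite mem_filter mulNr oppr_gt0 => /lt_gtF->.
apply: uniq_perm => //.
  rewrite /= cat_uniq rcons_uniq !filter_uniq // !andbT mem_cat mem_rcons inE.
  rewrite !negb_or (negbTE st) /= -andbA; apply/and4P; split.
  - by apply/negP => /notin_side[]; rewrite eqxx.
  - by apply/negP => /notin_side[]; rewrite eqxx.
  - apply/hasPn => x; rewrite mem_rcons inE => /predU1P[->|/opp_side//].
    by apply/negP => /notin_side[_]; rewrite eqxx.
  - by apply/negP => /notin_side[_]; rewrite eqxx.
move=> x; rewrite inE mem_cat mem_rcons inE; apply/idP/idP.
  by case/or4P=> [/eqP->|/mem_side[]|/eqP->|/mem_side[]].
move=> xX; have [//|xs] := eqVneq x s; have [_|xt] := eqVneq x t; first by rewrite !orbT.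
by case: (side_cases tau0 xX xs xt) => ->; rewrite ?orbT.
Qed.

(* If the turn from the last point [a] left of [st] to the first point [b] right
   of it exceeds a half-turn, all points lie in the sector [b s a], of opening
   less than a half-turn. *)
Lemma exposed_of_gap a b : a \in side 1 -> b \in side (-1) ->
  (forall x, x \in side 1 -> angle_key x <= angle_key a) ->
  (forall x, x \in side (-1) -> angle_key b <= angle_key x) ->
  cross s a b < 0 -> exposed X s.
Proof.
move=> aS bS amax bmin ab.
have ca : 0 < cross s t a by case: (mem_side aS); rewrite mul1r.
have cb : cross s t b < 0 by case: (mem_side bS); rewrite mulN1r oppr_gt0.
have keyE u v : u \in X -> u != s -> u != t -> v \in X -> v != s -> v != t ->
    lin dir s t * cross s u v = cross s t u * cross s t v * (angle_key v - angle_key u).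
  by move=> *; apply: cross_angle_key; apply: cross_neq0.
have [aX a_s a_t _] := mem_side aS; have [bX b_s b_t _] := mem_side bS.
have kab : angle_key a < angle_key b.
  move: ab; rewrite -oppr_gt0 -cross_antisym -(pmulr_rgt0 _ dir_gt0) keyE //.
  by rewrite nmulr_rgt0 ?nmulr_rlt0 // subr_lt0.
exists (a.2 - b.2, b.1 - a.1) => x xX xs.
rewrite (_ : lin _ s x = cross s b x + cross s x a); last by rewrite /lin /cross /=; ring.
have [->|xt] := eqVneq x t.
  by rewrite [cross s b t]cross_antisym; lra.
case: (side_cases (oner_neq0 R) xX xs xt) => xS.
  have cx : 0 < cross s t x by case: (mem_side xS); rewrite mul1r.
  have xa : 0 <= cross s x a.
    rewrite -(pmulr_rge0 _ dir_gt0) keyE // mulr_ge0 ?subr_ge0 ?amax //.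
    by rewrite ltW ?mulr_gt0.
  suff : 0 < cross s b x by lra.
  rewrite -(pmulr_rgt0 _ dir_gt0) keyE // nmulr_rgt0 ?nmulr_rlt0 // subr_lt0.
  exact: le_lt_trans (amax x xS) kab.
have cx : cross s t x < 0 by case: (mem_side xS); rewrite mulN1r oppr_gt0.
have bx : 0 <= cross s b x.
  rewrite -(pmulr_rge0 _ dir_gt0) keyE // mulr_ge0 ?subr_ge0 ?bmin //.
  by rewrite ltW ?nmulr_rgt0.
suff : 0 < cross s x a by lra.
rewrite -(pmulr_rgt0 _ dir_gt0) keyE // nmulr_rgt0 ?nmulr_rlt0 // subr_lt0.
exact: lt_le_trans kab (bmin x xS).
Qed.

Lemma two_fans_noncrossing A a b B :
  pairwise (fun u v => 0 < cross s u v) (rcons A a) ->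
  pairwise (fun u v => 0 < cross s u v) (b :: rcons B t) ->
  {in rcons A a, forall u, 0 < cross s t u} -> {in b :: B, forall v, cross s t v < 0} ->
  0 < cross s a b ->
  all_pairs noncrossing_edges (edges s (rcons A a ++ b :: rcons B t)).
Proof.
move=> fanA fanB leftA rightB ab.
have ccw1 L : pairwise (fun u v => 0 < cross s u v) L ->
    pairwise (fun u v => 0 < 1 * cross s u v) L.
  by apply: sub_pairwise => u v; rewrite mul1r.
rewrite edges_cat last_rcons; apply/all_pairs_cat; split.
- exact/(fan_path_noncrossing (k := 1))/ccw1.
- split; first exact: fan_bridge_head fanB ab.
  exact/(fan_edges_noncrossing (k := 1))/ccw1.
move=> e [u' v'] eA; rewrite inE => /predU1P[->|]; first exact: fan_bridge_last eA.
case: e eA => u v /mem_edges[]; rewrite belast_rcons => usA vA.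
move=> /mem_edges[]; rewrite belast_rcons => ubB vBt.
(* the line [st] separates the two fans *)
apply: (affine_separates (affine_cross t s)); rewrite ![cross t s _]cross_flip.
- move: usA; rewrite inE => /predU1P[->|uA]; first by rewrite cross_origin oppr0.
  by rewrite oppr_le0 ltW // leftA // mem_rcons inE uA orbT.
- by rewrite oppr_le0 ltW // leftA.
- by right; rewrite oppr_lt0 leftA.
- by rewrite oppr_ge0 ltW // rightB.
- move: vBt; rewrite mem_rcons inE => /predU1P[->|vB]; first by rewrite cross_same oppr0.
  by rewrite oppr_ge0 ltW // rightB // inE vB orbT.
- by left; rewrite oppr_gt0 rightB.
Qed.

Lemma one_sided_hampath tau : tau != 0 -> side (- tau) = [::] ->
  exists q : seq pt, noncrossing_hampath X s t q.
Proof.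
move=> tau0 empty; exists (rcons (angle_sort (- tau) tau) t); split.
- rewrite -cats1; apply: (perm_sides (L2 := [::]) tau0); first exact: perm_angle_sort.
  by rewrite empty.
- exact: last_rcons.
- exact/fan_path_noncrossing/angle_sort_fan_rcons.
Qed.

Lemma two_sided_hampath : side 1 != [::] -> side (-1) != [::] ->
  exists q : seq pt, noncrossing_hampath X s t q.
Proof.
have one0 : (1 : R) != 0 := oner_neq0 R.
have side_nil tau : angle_sort 1 tau = [::] -> side tau = [::].
  by move=> e; apply/perm_nilP; rewrite perm_sym -e perm_angle_sort.
move=> Pne Nne; move eA: (angle_sort 1 1) => LA; case/lastP: LA eA => [|A a] eA.
  by move: Pne; rewrite side_nil.
case eB: (angle_sort 1 (-1)) => [|b B]; first by move: Nne; rewrite side_nil.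
have sideA u : (u \in rcons A a) = (u \in side 1) by rewrite -eA mem_angle_sort.
have sideB u : (u \in b :: B) = (u \in side (-1)) by rewrite -eB mem_angle_sort.
have aS : a \in side 1 by rewrite -sideA mem_rcons mem_head.
have bS : b \in side (-1) by rewrite -sideB mem_head.
have [ab|ab|ab0] := ltgtP (cross s a b) 0.
- apply: exposed_hampath => //; apply: (exposed_of_gap aS bS) ab => x xS.
    by have := angle_sort_last one0 eA xS; rewrite !mul1r.
  by have := angle_sort_head one0 eB xS; rewrite !mul1r.
- exists (rcons A a ++ b :: rcons B t); split.
  + by apply: (perm_sides (L2 := b :: B) one0); rewrite -?eA -?eB ?perm_angle_sort.
  + by rewrite last_cat last_rcons /= last_rcons.
  apply: two_fans_noncrossing => //.
  + by have := angle_sort_fan 1 one0; rewrite eA; apply: sub_pairwise => u v; rewrite mul1r.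
  + have := @angle_sort_fan_rcons (-1); rewrite oppr_eq0 opprK eB => /(_ one0).
    by apply: sub_pairwise => u v; rewrite mul1r.
  + by move=> u; rewrite sideA => /mem_side[_ _ _]; rewrite mul1r.
  + by move=> v; rewrite sideB => /mem_side[_ _ _]; rewrite mulN1r oppr_gt0.
have [aX a_s _ ca] := mem_side aS; have [bX b_s _ cb] := mem_side bS.
have eab := eq_of_cross_eq0 ntc sX aX bX a_s b_s ab0.
by move: ca cb; rewrite eab mulN1r oppr_gt0 mul1r => /lt_gtF ->.
Qed.

End AngularOrder.

End Plane.

Theorem lemma2 (R : realType) (X : seq (R * R)) (s t : R * R) :
  uniq X -> no_three_collinear X -> s \in X -> t \in X -> s != t ->
  exists p : seq (R * R),
    [/\ perm_eq p X, head t p = s, last s p = t & noncrossing_path p].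
Proof.
move=> uX ntc sX tX st.
have [q [pq lq ncq]] : exists q, noncrossing_hampath X s t q.
  have one0 : (1 : R) != 0 := oner_neq0 R.
  have [N0|Nne] := eqVneq (side X s t (-1)) [::].
    exact: one_sided_hampath one0 N0.
  have [P0|Pne] := eqVneq (side X s t 1) [::].
    by apply: (@one_sided_hampath _ _ _ _ uX ntc sX tX st (-1)); rewrite ?oppr_eq0 ?opprK.
  exact: two_sided_hampath.
by exists (s :: q); split=> //; apply: noncrossing_path_edges.
Qed.
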